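(* Every scalable NCG is asymptotically well designed, i.e. for every sequence $(d^{(n)})$ of user volume vectors with $T(d^{(n)})\to\infty$ one has $\mathrm{PoA}(d^{(n)})\to 1$.
   Context: A non-atomic congestion game (NCG) consists of: a finite set $A$ of resources; an integer $K\ge 1$ of user groups; pairwise disjoint finite nonempty sets $\mathcal S_1,\dots,\mathcal S_K$ of strategies, $\mathcal S=\bigcup_{k}\mathcal S_k$; constants $r(a,s)\ge 0$ with $\sum_{a} r(a,s)>0$ for every $s$ and $\sum_{s} r(a,s)>0$ for every $a$; continuous nondecreasing consumption price functions $\tau_a:[0,\infty)\to[0,\infty)$; and a user volume vector $d=(d_k)_{k=1}^K\in\mathbb R_{\ge 0}^K$ with total volume $T(d)=\sum_k d_k$. The game structure is fixed while $d$ varies (over all of $\mathbb R^K_{\ge0}$ unless a set of admissible user volume vectors is specified, in which case every quantification over user volume vectors ranges over that set). A feasible profile for $d$ is $f=(f_s)_{s\in\mathcal S}$ with $f_s\ge 0$ and $\sum_{s\in\mathcal S_k} f_s=d_k$ for all $k$; loads $f_a=\sum_{s} r(a,s)f_s$, strategy prices $\tau_s(f)=\sum_{a} r(a,s)\tau_a(f_a)$, social cost $C(f)=\sum_a f_a\tau_a(f_a)=\sum_s f_s\tau_s(f)$. $f$ is an NE-profile if for every $k$ and all $s,s'\in\mathcal S_k$ with $f_s>0$, $\tau_s(f)\le\tau_{s'}(f)$; an SO-profile if it minimizes $C$. All NE-profiles have the same cost, as do all SO-profiles; $\mathrm{PoA}(d)=C(\tilde f)/C(f^* )$ for an NE-profile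 $\tilde f$ and SO-profile $f^*$ for $d$. The game is asymptotically well designed (in AWDG) if $\mathrm{PoA}(d^{(n)})\to1$ whenever $T(d^{(n)})\to\infty$. Normalization: for $d$ with $T(d)>0$, put $\lambda_k=d_k/T(d)$ and $\lambda=(\lambda_k)_k$. For each resource $a$ let $I_a=\{\sum_s r(a,s)\xi_s:\ \xi\in\mathbb R^{\mathcal S}_{\ge0},\ \sum_s\xi_s\le 1\}=[0,\max_s r(a,s)]$. Scalability: the NCG is scalable if for every sequence $(d^{(n)})$ of user volume vectors with $T(d^{(n)})\to\infty$ there exist a subsequence $(n_i)$ and positive reals $(g_i)$ such that: (S0) $\lambda^{(n_i)}\to\lambda$ for some vector $\lambda$; (S1) there are limit price functions $l_a$ on $I_a$, each either a nondecreasing function with values in $[0,\infty)$, or $l_a\equiv+\infty$ on $I_a\cap(0,\infty)$; (S2) for all $a\in A$ and $x\in I_a$, $\tau_a(T(d^{(n_i)})x)/g_i\to l_a(x)$ as $i\to\infty$, and if $l_a(x)<\infty$ then $l_a$ is continuous at $x$; (S3) every group $k$ is either negligible, meaning that for every choice of feasible profiles $f^{(i)}$ for $d^{(n_i)}$, $\frac{1}{T(d^{(n_i)})g_i}\sum_{s\in\mathcal S_k} f^{(i)}_s\tau_s(f^{(i)})\to 0$, or has a tight strategy, i.e. some $s\in\mathcal S_k$ with $l_a$ real-valued for every $a$ with $r(a,s)>0$; (S4) in the limit game $\Gamma_\infty$ — the NCG with resources $A^{tight}$ (those $a$ with $r(a,s)>0$ for some tight $s$), strategy sets $\mathcal S_k^{tight}$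 (tight strategies of $\mathcal S_k$, only groups with $\mathcal S_k^{tight}\neq\emptyset$ included), the same $r(a,s)$, prices $l_a$, and user volume vector $\lambda$ — NE-profiles and SO-profiles have equal cost; (S5) the cost of NE-profiles of $\Gamma_\infty$ is positive. *)

From Stdlib Require Import Reals Lra Lia Arith.
Open Scope R_scope.

Fixpoint fsum (n : nat) (f : nat -> R) : R :=
  match n with
  | O => 0
  | S m => fsum m f + f m
  end.

Fixpoint fmax (n : nat) (f : nat -> R) : R :=
  match n with
  | O => 0
  | S m => Rmax (fmax m f) (f m)
  end.

(** Resources are 0..nA-1, strategies 0..nS-1,
    user groups 0..K-1; strategy s belongs to S_(grp s) (so the S_k are
    pairwise disjoint); r a s is the consumption constant r(a,s);
    tau a is the consumption price function of resource a. *)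
Record Game := mkGame {
  nA : nat;
  nS : nat;
  K : nat;
  grp : nat -> nat;
  r : nat -> nat -> R;
  tau : nat -> R -> R
}.

Definition valid_NCG (G : Game) : Prop :=
  (1 <= K G)%nat /\
  (forall s, (s < nS G)%nat -> (grp G s < K G)%nat) /\
  (forall k, (k < K G)%nat -> exists s, (s < nS G)%nat /\ grp G s = k) /\
  (forall a s, (a < nA G)%nat -> (s < nS G)%nat -> 0 <= r G a s) /\
  (forall s, (s < nS G)%nat -> 0 < fsum (nA G) (fun a => r G a s)) /\
  (forall a, (a < nA G)%nat -> 0 < fsum (nS G) (fun s => r G a s)) /\
  (forall a, (a < nA G)%nat ->
     (forall x, 0 <= x -> continuity_pt (tau G a) x) /\
     (forall x y, 0 <= x -> x <= y -> tau G a x <= tau G a y) /\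
     (forall x, 0 <= x -> 0 <= tau G a x)).

Definition loadp (G : Game) (f : nat -> R) (a : nat) : R :=
  fsum (nS G) (fun s => r G a s * f s).

Definition spricep (G : Game) (p : nat -> R -> R) (f : nat -> R) (s : nat) : R :=
  fsum (nA G) (fun a => r G a s * p a (loadp G f a)).

Definition costp (G : Game) (p : nat -> R -> R) (f : nat -> R) : R :=
  fsum (nA G) (fun a => loadp G f a * p a (loadp G f a)).

Definition gvol (G : Game) (f : nat -> R) (k : nat) : R :=
  fsum (nS G) (fun s => if Nat.eqb (grp G s) k then f s else 0).

Definition T (G : Game) (d : nat -> R) : R := fsum (K G) d.

Definition feasible (G : Game) (d : nat -> R) (f : nat -> R) : Prop :=
  (forall s, (s < nS G)%nat -> 0 <= f s) /\
  (forall k, (k < K G)%nat -> gvol G f k = d k).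

Definition sprice (G : Game) (f : nat -> R) (s : nat) : R := spricep G (tau G) f s.
Definition cost (G : Game) (f : nat -> R) : R := costp G (tau G) f.

Definition is_NE (G : Game) (d : nat -> R) (f : nat -> R) : Prop :=
  feasible G d f /\
  forall s s', (s < nS G)%nat -> (s' < nS G)%nat -> grp G s = grp G s' ->
    0 < f s -> sprice G f s <= sprice G f s'.

Definition is_SO (G : Game) (d : nat -> R) (f : nat -> R) : Prop :=
  feasible G d f /\ forall g, feasible G d g -> cost G f <= cost G g.

(** Asymptotically well designed, w.r.t. the set Adm of admissible user
    volume vectors: PoA(d^(n)) -> 1 whenever T(d^(n)) -> infinity,
    PoA being the ratio NE-cost / SO-cost (for any choice of NE- and
    SO-profiles; all NE- resp. SO-profiles have the same cost). *)
Definition AWDG (G : Game) (Adm : (nat -> R) -> Prop) : Prop :=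
  forall dn : nat -> nat -> R,
    (forall n, Adm (dn n)) ->
    cv_infty (fun n => T G (dn n)) ->
    forall fNE fSO : nat -> nat -> R,
      (forall n, is_NE G (dn n) (fNE n)) ->
      (forall n, is_SO G (dn n) (fSO n)) ->
      Un_cv (fun n => cost G (fNE n) / cost G (fSO n)) 1.

(** Extended nonnegative values for the limit price functions. *)
Inductive ER : Type :=
| Fin : R -> ER
| PInf : ER.

Definition ER_lim (u : nat -> R) (e : ER) : Prop :=
  match e with
  | Fin y => Un_cv u y
  | PInf => cv_infty u
  end.

Definition inI (G : Game) (a : nat) (x : R) : Prop :=
  0 <= x <= fmax (nS G) (fun s => r G a s).

(** Real value of a limit price (junk 0 at +infinity; only used where finite). *)
Definition lval (l : nat -> R -> ER) (a : nat) (x : R) : R :=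
  match l a x with Fin y => y | PInf => 0 end.

Definition real_valued (G : Game) (l : nat -> R -> ER) (a : nat) : Prop :=
  forall x, inI G a x -> exists y, l a x = Fin y.

Definition S1 (G : Game) (l : nat -> R -> ER) : Prop :=
  forall a, (a < nA G)%nat ->
    (forall x, inI G a x -> exists y, l a x = Fin y /\ 0 <= y) /\
    (forall x y, inI G a x -> inI G a y -> x <= y -> lval l a x <= lval l a y)
    \/
    (forall x, inI G a x -> 0 < x -> l a x = PInf).

Definition cont_at (G : Game) (l : nat -> R -> ER) (a : nat) (x : R) : Prop :=
  forall y, l a x = Fin y ->
  forall eps, 0 < eps -> exists delta, 0 < delta /\
    forall x', inI G a x' -> Rabs (x' - x) < delta ->
      exists y', l a x' = Fin y' /\ Rabs (y' - y) < eps.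

Definition tight (G : Game) (l : nat -> R -> ER) (s : nat) : Prop :=
  (s < nS G)%nat /\
  forall a, (a < nA G)%nat -> 0 < r G a s -> real_valued G l a.

(** Its profiles are represented as
    profiles on all strategies vanishing on non-tight strategies; then
    loads vanish on non-tight resources, so sums over all resources /
    strategies coincide with sums over A^tight / S^tight. *)
Definition lim_feasible (G : Game) (l : nat -> R -> ER) (lam : nat -> R)
    (h : nat -> R) : Prop :=
  (forall s, (s < nS G)%nat -> 0 <= h s) /\
  (forall s, (s < nS G)%nat -> ~ tight G l s -> h s = 0) /\
  (forall k, (k < K G)%nat -> (exists s, tight G l s /\ grp G s = k) ->
     gvol G h k = lam k).

Definition lim_NE (G : Game) (l : nat -> R -> ER) (lam : nat -> R)
    (h : nat -> R) : Prop :=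
  lim_feasible G l lam h /\
  forall s s', tight G l s -> tight G l s' -> grp G s = grp G s' ->
    0 < h s -> spricep G (lval l) h s <= spricep G (lval l) h s'.

Definition lim_SO (G : Game) (l : nat -> R -> ER) (lam : nat -> R)
    (h : nat -> R) : Prop :=
  lim_feasible G l lam h /\
  forall h', lim_feasible G l lam h' -> costp G (lval l) h <= costp G (lval l) h'.

Definition scalable (G : Game) (Adm : (nat -> R) -> Prop) : Prop :=
  forall dn : nat -> nat -> R,
    (forall n, Adm (dn n)) ->
    cv_infty (fun n => T G (dn n)) ->
    exists (phi : nat -> nat) (g : nat -> R) (lam : nat -> R) (l : nat -> R -> ER),
      (forall i j, (i < j)%nat -> (phi i < phi j)%nat) /\
      (forall i, 0 < g i) /\
      (forall k, (k < K G)%nat ->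
         Un_cv (fun i => dn (phi i) k / T G (dn (phi i))) (lam k)) /\
      S1 G l /\
      (forall a x, (a < nA G)%nat -> inI G a x ->
         ER_lim (fun i => tau G a (T G (dn (phi i)) * x) / g i) (l a x) /\
         cont_at G l a x) /\
      (forall k, (k < K G)%nat ->
         (forall fi : nat -> nat -> R,
            (forall i, feasible G (dn (phi i)) (fi i)) ->
            Un_cv (fun i => / (T G (dn (phi i)) * g i) *
                     fsum (nS G) (fun s => if Nat.eqb (grp G s) k
                                           then fi i s * sprice G (fi i) s else 0)) 0)
         \/ (exists s, tight G l s /\ grp G s = k)) /\
      (forall h h', lim_NE G l lam h -> lim_SO G l lam h' ->
         costp G (lval l) h = costp G (lval l) h') /\
      (forall h, lim_NE G l lam h -> 0 < costp G (lval l) h).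

(* Along a sequence of volume vectors with T -> oo, pass to a subsequence where the
   scalability data exist and the volume shares f_s / T of equilibrium and optimal
   profiles converge, to h1 and h2.  After dividing costs by T g, the price of a
   tight strategy converges to its limit-game price at the limit shares, while a
   nontight strategy carrying a share bounded away from 0 has diverging cost.
   Hence h1 and h2 vanish off tight strategies, h1 is a Nash profile of the limit
   game, and the scaled equilibrium cost tends to its cost.  Lifting arbitrary
   limit-game profiles back to feasible profiles shows that h2 is optimal in the
   limit game and that the scaled optimal cost tends to its cost.  By (S4) the two
   limits agree and by (S5) they are positive, so the PoA along the subsequence
   tends to 1; since every subsequence has such a further subsequence, PoA -> 1. *)

From Stdlib Require Import Reals Lra Lia ClassicalEpsilon Classical.
Open Scope R_scope.

(** * Finite sums *)

Lemma fsum_ext n f g :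
  (forall i, (i < n)%nat -> f i = g i) -> fsum n f = fsum n g.
Proof.
  induction n as [|n IH]; intros H; simpl; [reflexivity|].
  rewrite IH by (intros; apply H; lia); rewrite H by lia; reflexivity.
Qed.

Lemma fsum_le n f g :
  (forall i, (i < n)%nat -> f i <= g i) -> fsum n f <= fsum n g.
Proof.
  induction n as [|n IH]; intros H; simpl; [lra|].
  apply Rplus_le_compat; [apply IH; intros; apply H; lia | apply H; lia].
Qed.

Lemma fsum_zero n : fsum n (fun _ => 0) = 0.
Proof. induction n; simpl; lra. Qed.

Lemma fsum_nonneg n f : (forall i, (i < n)%nat -> 0 <= f i) -> 0 <= fsum n f.
Proof. intros H; rewrite <- (fsum_zero n); apply fsum_le, H. Qed.

Lemma fsum_plus n f g : fsum n (fun i => f i + g i) = fsum n f + fsum n g.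
Proof. induction n; simpl; lra. Qed.

Lemma fsum_mult_l n c f : fsum n (fun i => c * f i) = c * fsum n f.
Proof. induction n as [|n IH]; simpl; [lra|]. rewrite IH; ring. Qed.

Lemma fsum_mult_r n c f : fsum n (fun i => f i * c) = fsum n f * c.
Proof. induction n as [|n IH]; simpl; [lra|]. rewrite IH; ring. Qed.

Lemma fsum_term_le n f i :
  (forall j, (j < n)%nat -> 0 <= f j) -> (i < n)%nat -> f i <= fsum n f.
Proof.
  induction n as [|n IH]; intros H Hi; simpl; [lia|].
  assert (0 <= fsum n f) by (apply fsum_nonneg; intros; apply H; lia).
  assert (0 <= f n) by (apply H; lia).
  destruct (Nat.eq_dec i n) as [->|Hne]; [lra|].
  assert (f i <= fsum n f) by (apply IH; [intros; apply H|]; lia).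
  lra.
Qed.

Lemma fsum_swap n m F :
  fsum n (fun i => fsum m (fun j => F i j)) = fsum m (fun j => fsum n (fun i => F i j)).
Proof.
  induction n as [|n IH]; simpl; [symmetry; apply fsum_zero|].
  rewrite IH, <- fsum_plus; reflexivity.
Qed.

Lemma fsum_eqb n m v :
  (m < n)%nat -> fsum n (fun k => if Nat.eqb m k then v else 0) = v.
Proof.
  induction n as [|n IH]; intros Hm; simpl; [lia|].
  destruct (Nat.eqb_spec m n) as [->|Hne].
  - rewrite (fsum_ext n _ (fun _ => 0)), fsum_zero; [lra|].
    intros i Hi; destruct (Nat.eqb_spec n i); [lia | reflexivity].
  - rewrite IH by lia; lra.
Qed.

Lemma fmax_ge n f i : (i < n)%nat -> f i <= fmax n f.
Proof.
  induction n as [|n IH]; intros Hi; simpl; [lia|].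
  destruct (Nat.eq_dec i n) as [->|Hne]; [apply Rmax_r|].
  eapply Rle_trans; [apply IH; lia | apply Rmax_l].
Qed.

(** * Sequences and subsequences *)

Definition eventually (P : nat -> Prop) : Prop :=
  exists N, forall n, (N <= n)%nat -> P n.

Lemma eventually_mono (P Q : nat -> Prop) :
  (forall n, P n -> Q n) -> eventually P -> eventually Q.
Proof. intros H [N HN]; exists N; auto. Qed.

Lemma eventually_and (P Q : nat -> Prop) :
  eventually P -> eventually Q -> eventually (fun n => P n /\ Q n).
Proof. intros [N1 H1] [N2 H2]; exists (max N1 N2); split; [apply H1 | apply H2]; lia. Qed.

Lemma Un_cv_const c : Un_cv (fun _ => c) c.
Proof.
  intros eps Heps; exists O; intros n _.
  unfold R_dist; rewrite Rminus_diag, Rabs_R0; exact Heps.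
Qed.

Lemma Un_cv_eventually_ext u v L :
  Un_cv u L -> eventually (fun n => u n = v n) -> Un_cv v L.
Proof.
  intros Hu [N HN] eps Heps; destruct (Hu eps Heps) as [N1 H1].
  exists (max N N1); intros n Hn; rewrite <- HN by lia; apply H1; lia.
Qed.

Lemma Un_cv_ext u v L : Un_cv u L -> (forall n, u n = v n) -> Un_cv v L.
Proof. intros Hu H; apply (Un_cv_eventually_ext u); [exact Hu | exists O; auto]. Qed.

Lemma Un_cv_eventually_gt u L M : Un_cv u L -> M < L -> eventually (fun n => M < u n).
Proof.
  intros Hu HM; destruct (Hu (L - M)) as [N HN]; [lra|]; exists N; intros n Hn.
  specialize (HN n Hn); unfold R_dist in HN; apply Rabs_def2 in HN; lra.
Qed.

Lemma Un_cv_eventually_lt u L M : Un_cv u L -> L < M -> eventually (fun n => u n < M).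
Proof.
  intros Hu HM; destruct (Hu (M - L)) as [N HN]; [lra|]; exists N; intros n Hn.
  specialize (HN n Hn); unfold R_dist in HN; apply Rabs_def2 in HN; lra.
Qed.

Lemma Un_cv_le u v a b :
  Un_cv u a -> Un_cv v b -> eventually (fun n => u n <= v n) -> a <= b.
Proof.
  intros Hu Hv Hle; apply Rnot_lt_le; intros Hba.
  destruct (eventually_and _ _ (eventually_and _ _ Hle
    (Un_cv_eventually_gt u a ((a + b) / 2) Hu ltac:(lra)))
    (Un_cv_eventually_lt v b ((a + b) / 2) Hv ltac:(lra))) as [N HN].
  destruct (HN N (Nat.le_refl N)) as [[H1 H2] H3]; lra.
Qed.

Lemma Un_cv_ge_const u L M : Un_cv u L -> eventually (fun n => M <= u n) -> M <= L.
Proof. intros Hu; apply (Un_cv_le (fun _ => M) u M L (Un_cv_const M) Hu). Qed.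

Lemma Un_cv_le_const u L M : Un_cv u L -> eventually (fun n => u n <= M) -> L <= M.
Proof. intros Hu; apply (Un_cv_le u (fun _ => M) L M Hu (Un_cv_const M)). Qed.

Lemma Un_cv_squeeze u v w L :
  Un_cv u L -> Un_cv v L -> eventually (fun n => u n <= w n <= v n) -> Un_cv w L.
Proof.
  intros Hu Hv [N HN] eps Heps.
  destruct (Hu eps Heps) as [N1 H1], (Hv eps Heps) as [N2 H2].
  exists (max N (max N1 N2)); intros n Hn.
  specialize (H1 n ltac:(lia)); specialize (H2 n ltac:(lia)); specialize (HN n ltac:(lia)).
  unfold R_dist in *; apply Rabs_def2 in H1, H2; apply Rabs_def1; lra.
Qed.

Lemma Un_cv_fsum n (u : nat -> nat -> R) L :
  (forall i, (i < n)%nat -> Un_cv (fun j => u j i) (L i)) ->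
  Un_cv (fun j => fsum n (u j)) (fsum n L).
Proof.
  induction n as [|n IH]; intros H; simpl; [apply Un_cv_const|].
  apply CV_plus; [apply IH; intros; apply H | apply H]; lia.
Qed.

Lemma Un_cv_ratio_1 a b c :
  Un_cv a c -> Un_cv b c -> 0 < c -> Un_cv (fun n => a n / b n) 1.
Proof.
  intros Ha Hb Hc eps Heps.
  set (e := Rmin (c / 2) (eps * c / 4)).
  assert (He : 0 < e) by (apply Rmin_glb_lt; nra).
  assert (He1 : e <= c / 2) by apply Rmin_l.
  assert (He2 : e <= eps * c / 4) by apply Rmin_r.
  destruct (Ha e He) as [N1 H1], (Hb e He) as [N2 H2].
  exists (max N1 N2); intros n Hn.
  specialize (H1 n ltac:(lia)); specialize (H2 n ltac:(lia)).
  unfold R_dist in *; apply Rabs_def2 in H1, H2.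
  assert (Hbn : c / 2 < b n) by lra.
  replace (a n / b n - 1) with ((a n - b n) / b n) by (field; lra).
  unfold Rdiv; rewrite Rabs_mult, (Rabs_right (/ b n)) by (left; apply Rinv_0_lt_compat; lra).
  assert (Hab : Rabs (a n - b n) < 2 * e) by (apply Rabs_def1; lra).
  apply Rle_lt_trans with (Rabs (a n - b n) * / (c / 2)).
  - apply Rmult_le_compat_l; [apply Rabs_pos | apply Rinv_le_contravar; lra].
  - apply (Rmult_lt_reg_r (c / 2)); [lra|].
    rewrite Rmult_assoc, Rinv_l by lra; nra.
Qed.

Lemma cv_infty_eventually_gt u M : cv_infty u -> eventually (fun n => M < u n).
Proof. intros Hu; destruct (Hu M) as [N HN]; exists N; intros n Hn; apply HN; lia. Qed.

Lemma cv_infty_le u v : cv_infty u -> eventually (fun n => u n <= v n) -> cv_infty v.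
Proof.
  intros Hu Hle M; destruct (eventually_and _ _ Hle (cv_infty_eventually_gt u M Hu)) as [N HN].
  exists N; intros n Hn; destruct (HN n ltac:(lia)); lra.
Qed.

Lemma cv_infty_scal c u : 0 < c -> cv_infty u -> cv_infty (fun n => c * u n).
Proof.
  intros Hc Hu M; destruct (Hu (M / c)) as [N HN]; exists N; intros n Hn.
  specialize (HN n Hn); apply (Rmult_lt_compat_l c) in HN; [|exact Hc].
  replace (c * (M / c)) with M in HN by (field; lra); exact HN.
Qed.

Lemma cv_infty_not_bounded u M : cv_infty u -> ~ eventually (fun n => u n <= M).
Proof.
  intros Hu Hle; destruct (eventually_and _ _ Hle (cv_infty_eventually_gt u M Hu)) as [N HN].
  destruct (HN N (Nat.le_refl N)); lra.
Qed.

Definition strict_incr (phi : nat -> nat) : Prop :=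
  forall i j, (i < j)%nat -> (phi i < phi j)%nat.

Lemma strict_incr_ge phi : strict_incr phi -> forall n, (n <= phi n)%nat.
Proof.
  intros H n; induction n as [|n IH]; [lia|].
  specialize (H n (S n) ltac:(lia)); lia.
Qed.

Lemma strict_incr_S phi : (forall n, (phi n < phi (S n))%nat) -> strict_incr phi.
Proof.
  intros H i j Hij; induction Hij as [|m _ IH]; [apply H|].
  specialize (H m); lia.
Qed.

Lemma strict_incr_comp phi psi :
  strict_incr phi -> strict_incr psi -> strict_incr (fun n => phi (psi n)).
Proof. intros Hphi Hpsi i j Hij; apply Hphi, Hpsi, Hij. Qed.

Lemma strict_incr_inj phi : strict_incr phi -> forall i j, phi i = phi j -> i = j.
Proof.
  intros H i j E; destruct (Nat.lt_trichotomy i j) as [L|[L|L]]; [|exact L|].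
  - specialize (H i j L); lia.
  - specialize (H j i L); lia.
Qed.

Lemma Un_cv_subseq u L phi :
  Un_cv u L -> strict_incr phi -> Un_cv (fun n => u (phi n)) L.
Proof.
  intros Hu Hphi eps Heps; destruct (Hu eps Heps) as [N HN]; exists N; intros n Hn.
  apply HN; pose proof (strict_incr_ge phi Hphi n); lia.
Qed.

Lemma cv_infty_subseq u phi : cv_infty u -> strict_incr phi -> cv_infty (fun n => u (phi n)).
Proof.
  intros Hu Hphi M; destruct (Hu M) as [N HN]; exists N; intros n Hn.
  apply HN; pose proof (strict_incr_ge phi Hphi n); lia.
Qed.

Lemma strict_incr_choice (P : nat -> nat -> Prop) :
  (forall N k, exists p, (N <= p)%nat /\ P k p) ->
  exists phi, strict_incr phi /\ forall k, P k (phi k).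
Proof.
  intros H.
  assert (pick : forall N k, {p | (N <= p)%nat /\ P k p})
    by (intros; apply constructive_indefinite_description, H).
  set (phi := fix phi n := match n with
                           | O => proj1_sig (pick O O)
                           | S m => proj1_sig (pick (S (phi m)) (S m))
                           end).
  exists phi; split.
  - apply strict_incr_S; intros n; simpl.
    destruct (proj2_sig (pick (S (phi n)) (S n))); lia.
  - intros [|n]; simpl; apply (proj2_sig (pick _ _)).
Qed.

Lemma bounded_seq_cv_subseq u B :
  (forall n, Rabs (u n) <= B) -> exists phi L, strict_incr phi /\ Un_cv (fun n => u (phi n)) L.
Proof.
  intros Hb.
  destruct (Bolzano_Weierstrass u (fun c => -B <= c <= B) (compact_P3 (-B) B)) as [L HL].
  { intros n; specialize (Hb n).
    pose proof (Rle_abs (u n)); pose proof (Rle_abs (- u n)); rewrite Rabs_Ropp in *; lra. }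
  destruct (strict_incr_choice (fun k p => Rabs (u p - L) < / INR (S k))) as [phi [Hphi Hclose]].
  { intros N k.
    assert (Hpos : 0 < / INR (S k)) by (apply Rinv_0_lt_compat, lt_0_INR; lia).
    destruct (HL (fun y => Rabs (y - L) < / INR (S k)) N) as [p Hp]; [|eauto].
    exists (mkposreal _ Hpos); intros y Hy; exact Hy. }
  exists phi, L; split; [exact Hphi|]; intros eps Heps.
  destruct (archimed_cor1 eps Heps) as [N [HN HN0]]; exists N; intros n Hn.
  eapply Rlt_trans; [apply Hclose|]; eapply Rle_lt_trans; [|exact HN].
  apply Rinv_le_contravar; [apply lt_0_INR; lia | apply le_INR; lia].
Qed.

Lemma bounded_family_cv_subseq m (w : nat -> nat -> R) B :
  (forall j i, (i < m)%nat -> Rabs (w j i) <= B) ->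
  exists phi L, strict_incr phi /\ forall i, (i < m)%nat -> Un_cv (fun j => w (phi j) i) (L i).
Proof.
  induction m as [|m IH]; intros Hb.
  - exists (fun n => n), (fun _ => 0); split; [intros i j; auto | intros; lia].
  - destruct IH as [phi [L [Hphi HL]]]; [intros; apply Hb; lia|].
    destruct (bounded_seq_cv_subseq (fun j => w (phi j) m) B) as [psi [Lm [Hpsi HLm]]];
      [intros; apply Hb; lia|].
    exists (fun n => phi (psi n)), (fun i => if Nat.eqb i m then Lm else L i).
    split; [apply strict_incr_comp; assumption|]; intros i Hi.
    destruct (Nat.eqb_spec i m) as [->|Hne]; [exact HLm|].
    apply (Un_cv_subseq (fun j => w (phi j) i)); [apply HL; lia | exact Hpsi].
Qed.

Lemma eventually_bounded_family_cv_subseq m (w : nat -> nat -> R) B :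
  eventually (fun j => forall i, (i < m)%nat -> Rabs (w j i) <= B) ->
  exists phi L, strict_incr phi /\ forall i, (i < m)%nat -> Un_cv (fun j => w (phi j) i) (L i).
Proof.
  intros [N HN].
  destruct (bounded_family_cv_subseq m (fun j i => w (j + N)%nat i) B) as [phi [L [Hphi HL]]].
  { intros j i Hi; apply HN; [lia | exact Hi]. }
  exists (fun j => (phi j + N)%nat), L; split; [|exact HL].
  intros i j Hij; specialize (Hphi i j Hij); lia.
Qed.

Lemma Un_cv_of_subseqs u L :
  (forall psi, strict_incr psi ->
     exists phi, strict_incr phi /\ Un_cv (fun n => u (psi (phi n))) L) ->
  Un_cv u L.
Proof.
  intros Hsub; apply NNPP; intros Hcv.
  apply not_all_ex_not in Hcv as [eps Hcv].
  apply imply_to_and in Hcv as [Heps Hcv].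
  assert (Hfar : forall N, exists n, (N <= n)%nat /\ ~ R_dist (u n) L < eps).
  { intros N; apply NNPP; intros HN; apply Hcv; exists N; intros n Hn.
    apply NNPP; intros C; apply HN; exists n; auto. }
  destruct (strict_incr_choice (fun _ p => ~ R_dist (u p) L < eps)) as [psi [Hpsi Hpsi_far]].
  { intros N _; apply Hfar. }
  destruct (Hsub psi Hpsi) as [phi [_ Hphi]].
  destruct (Hphi eps Heps) as [N HN].
  exact (Hpsi_far (phi N) (HN N (Nat.le_refl N))).
Qed.

Lemma extend_subfamily (phi : nat -> nat) (P : nat -> (nat -> R) -> Prop)
    (f : nat -> nat -> R) :
  strict_incr phi -> (forall i, exists g, P i g) -> (forall j, P (phi j) (f j)) ->
  exists F : nat -> nat -> R, (forall i, P i (F i)) /\ (forall j, F (phi j) = f j).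
Proof.
  intros Hphi Hex Hf.
  destruct (choice P Hex) as [g Hg].
  exists (fun i => match excluded_middle_informative (exists j, phi j = i) with
                   | left H => f (proj1_sig (constructive_indefinite_description _ H))
                   | right _ => g i
                   end).
  split.
  - intros i; destruct (excluded_middle_informative _) as [H|H]; [|apply Hg].
    destruct (constructive_indefinite_description _ H) as [j <-]; apply Hf.
  - intros j; destruct (excluded_middle_informative _) as [H|H].
    + destruct (constructive_indefinite_description _ H) as [j' E]; simpl.
      apply strict_incr_inj in E; [subst; reflexivity | exact Hphi].
    + exfalso; apply H; eauto.
Qed.

(** * Profiles of a game *)

Lemma costp_strategy_sum G p f :
  costp G p f = fsum (nS G) (fun s => f s * spricep G p f s).
Proof.
  unfold costp, spricep.
  rewrite (fsum_ext (nA G) _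
    (fun a => fsum (nS G) (fun s => r G a s * f s * p a (loadp G f a)))).
  - rewrite fsum_swap; apply fsum_ext; intros s _.
    rewrite <- fsum_mult_l; apply fsum_ext; intros; ring.
  - intros a _; unfold loadp at 1; rewrite <- fsum_mult_r; reflexivity.
Qed.

Lemma loadp_scale G f a c :
  c <> 0 -> loadp G f a = c * loadp G (fun s => f s / c) a.
Proof.
  intros Hc; unfold loadp; rewrite <- fsum_mult_l.
  apply fsum_ext; intros; field; exact Hc.
Qed.

Section ValidGame.

Variable G : Game.
Hypothesis Hval : valid_NCG G.

Lemma grp_lt_K s : (s < nS G)%nat -> (grp G s < K G)%nat.
Proof. destruct Hval as (_ & H & _); apply H. Qed.

Lemma grp_surj k : (k < K G)%nat -> exists s, (s < nS G)%nat /\ grp G s = k.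
Proof. destruct Hval as (_ & _ & H & _); apply H. Qed.

Lemma r_nonneg a s : (a < nA G)%nat -> (s < nS G)%nat -> 0 <= r G a s.
Proof. destruct Hval as (_ & _ & _ & H & _); apply H. Qed.

Lemma tau_monotone a x y :
  (a < nA G)%nat -> 0 <= x -> x <= y -> tau G a x <= tau G a y.
Proof. destruct Hval as (_ & _ & _ & _ & _ & _ & H); intros Ha; apply (H a Ha). Qed.

Lemma tau_nonneg a x : (a < nA G)%nat -> 0 <= x -> 0 <= tau G a x.
Proof. destruct Hval as (_ & _ & _ & _ & _ & _ & H); intros Ha; apply (H a Ha). Qed.

Lemma r_le_fmax a s : (s < nS G)%nat -> r G a s <= fmax (nS G) (fun s => r G a s).
Proof. intros Hs; apply (fmax_ge _ (fun s => r G a s)), Hs. Qed.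

Lemma fsum_gvol f : fsum (nS G) f = fsum (K G) (gvol G f).
Proof.
  unfold gvol.
  rewrite (fsum_swap (K G) (nS G) (fun k s => if Nat.eqb (grp G s) k then f s else 0)).
  apply fsum_ext; intros s Hs; symmetry; apply fsum_eqb, grp_lt_K, Hs.
Qed.

Section Profile.

Variables (d f : nat -> R).
Hypothesis Hf : feasible G d f.

Lemma feasible_nonneg s : (s < nS G)%nat -> 0 <= f s.
Proof. apply Hf. Qed.

Lemma feasible_total : fsum (nS G) f = T G d.
Proof. rewrite fsum_gvol; apply fsum_ext, Hf. Qed.

Lemma feasible_share_bounds s :
  0 < T G d -> (s < nS G)%nat -> 0 <= f s / T G d <= 1.
Proof.
  intros HT Hs; pose proof (feasible_nonneg s Hs).
  assert (f s <= T G d).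
  { rewrite <- feasible_total; apply fsum_term_le; [exact feasible_nonneg | exact Hs]. }
  split.
  - apply Rmult_le_pos; [lra | left; apply Rinv_0_lt_compat, HT].
  - apply (Rmult_le_reg_r (T G d)); [exact HT|].
    unfold Rdiv; rewrite Rmult_assoc, Rinv_l; lra.
Qed.

Lemma loadp_nonneg a : (a < nA G)%nat -> 0 <= loadp G f a.
Proof.
  intros Ha; apply fsum_nonneg; intros s Hs.
  apply Rmult_le_pos; [apply r_nonneg | apply feasible_nonneg]; assumption.
Qed.

Lemma sprice_nonneg s : (s < nS G)%nat -> 0 <= sprice G f s.
Proof.
  intros Hs; apply fsum_nonneg; intros a Ha.
  apply Rmult_le_pos; [apply r_nonneg; assumption|].
  apply tau_nonneg, loadp_nonneg; assumption.
Qed.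

Lemma share_load_in_I a : 0 < T G d -> (a < nA G)%nat ->
  inI G a (loadp G (fun s => f s / T G d) a).
Proof.
  intros HT Ha; split.
  - apply fsum_nonneg; intros s Hs.
    apply Rmult_le_pos; [apply r_nonneg | apply feasible_share_bounds]; assumption.
  - set (M := fmax (nS G) (fun s => r G a s)).
    apply Rle_trans with (fsum (nS G) (fun s => M * (f s / T G d))).
    + apply fsum_le; intros s Hs.
      apply Rmult_le_compat_r; [apply feasible_share_bounds | apply r_le_fmax]; assumption.
    + rewrite fsum_mult_l; unfold Rdiv; rewrite fsum_mult_r, feasible_total, Rinv_r; lra.
Qed.

End Profile.

End ValidGame.

(** * Games scaled along a sequence of volumes *)

Definition group_cost (G : Game) (k : nat) (f : nat -> R) : R :=
  fsum (nS G) (fun s => if Nat.eqb (grp G s) k then f s * sprice G f s else 0).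

Section ScaledGames.

Variable G : Game.
Hypothesis Hval : valid_NCG G.
Variables (dn : nat -> nat -> R) (g : nat -> R) (lam : nat -> R) (l : nat -> R -> ER).
Hypothesis Hdn : forall j k, (k < K G)%nat -> 0 <= dn j k.
Hypothesis HT : cv_infty (fun j => T G (dn j)).
Hypothesis Hg : forall j, 0 < g j.
Hypothesis HS0 : forall k, (k < K G)%nat -> Un_cv (fun j => dn j k / T G (dn j)) (lam k).
Hypothesis HS1 : S1 G l.
Hypothesis HS2 : forall a x, (a < nA G)%nat -> inI G a x ->
  ER_lim (fun j => tau G a (T G (dn j) * x) / g j) (l a x) /\ cont_at G l a x.

Definition negligible (k : nat) : Prop :=
  forall F : nat -> nat -> R, (forall j, feasible G (dn j) (F j)) ->
    Un_cv (fun j => / (T G (dn j) * g j) * group_cost G k (F j)) 0.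

Hypothesis HS3 : forall k, (k < K G)%nat ->
  negligible k \/ exists s, tight G l s /\ grp G s = k.

Let Tn j := T G (dn j).

Lemma Tn_eventually_pos : eventually (fun j => 0 < Tn j).
Proof. apply cv_infty_eventually_gt, HT. Qed.

Lemma nonreal_price_infinite a : (a < nA G)%nat -> ~ real_valued G l a ->
  forall x, inI G a x -> 0 < x -> l a x = PInf.
Proof.
  intros Ha Hnreal; destruct (HS1 a Ha) as [[Hfin _]|Hinf]; [|exact Hinf].
  exfalso; apply Hnreal; intros x Hx; destruct (Hfin x Hx) as [y [Hy _]]; eauto.
Qed.

Lemma inI_lim a x L : Un_cv x L -> eventually (fun j => inI G a (x j)) -> inI G a L.
Proof.
  intros Hx Hin; split.
  - apply (Un_cv_ge_const x L 0 Hx); revert Hin; apply eventually_mono; intros j []; assumption.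
  - apply (Un_cv_le_const x L _ Hx); revert Hin; apply eventually_mono; intros j []; assumption.
Qed.

Lemma scaled_price_le a j x y : (a < nA G)%nat -> 0 < Tn j -> 0 <= x <= y ->
  tau G a (Tn j * x) / g j <= tau G a (Tn j * y) / g j.
Proof.
  intros Ha HTj Hxy; apply Rmult_le_compat_r; [left; apply Rinv_0_lt_compat, Hg|].
  apply tau_monotone; [exact Hval | exact Ha | apply Rmult_le_pos; lra |].
  apply Rmult_le_compat_l; lra.
Qed.

(* Monotonicity of [tau a] squeezes the scaled price at a moving load between the
   scaled prices at two fixed loads, whose limits are close by continuity of [l a]. *)
Lemma real_price_cv a x L : (a < nA G)%nat -> real_valued G l a -> Un_cv x L ->
  eventually (fun j => inI G a (x j)) ->
  Un_cv (fun j => tau G a (Tn j * x j) / g j) (lval l a L).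
Proof.
  intros Ha Hreal Hx Hin.
  assert (HL : inI G a L) by (apply (inI_lim a x); assumption).
  destruct (Hreal L HL) as [y Hy]; unfold lval; rewrite Hy.
  intros eps Heps.
  destruct (proj2 (HS2 a L Ha HL) y Hy (eps / 2)) as [del [Hdel Hcont]]; [lra|].
  destruct HL as [HL0 HLM]; unfold inI in *.
  set (M := fmax (nS G) (fun s => r G a s)) in *.
  set (xm := Rmax 0 (L - del / 2)); set (xp := Rmin M (L + del / 2)).
  assert (Hxm : 0 <= xm <= M) by (split; [apply Rmax_l | apply Rmax_lub; lra]).
  assert (Hxp : 0 <= xp <= M) by (split; [apply Rmin_glb; lra | apply Rmin_l]).
  destruct (Hcont xm Hxm) as [ym [Hym Hym_close]].
  { unfold xm, Rmax; destruct (Rle_dec 0 (L - del / 2)); apply Rabs_def1; lra. }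
  destruct (Hcont xp Hxp) as [yp [Hyp Hyp_close]].
  { unfold xp, Rmin; destruct (Rle_dec M (L + del / 2)); apply Rabs_def1; lra. }
  pose proof (proj1 (HS2 a xm Ha Hxm)) as Hcvm; rewrite Hym in Hcvm.
  pose proof (proj1 (HS2 a xp Ha Hxp)) as Hcvp; rewrite Hyp in Hcvp.
  destruct (Hcvm (eps / 2)) as [N1 H1]; [lra|].
  destruct (Hcvp (eps / 2)) as [N2 H2]; [lra|].
  destruct (Hx (del / 2)) as [N3 H3]; [lra|].
  destruct (eventually_and _ _ Hin Tn_eventually_pos) as [N4 H4].
  exists (max (max N1 N2) (max N3 N4)); intros j Hj.
  specialize (H1 j ltac:(lia)); specialize (H2 j ltac:(lia)).
  specialize (H3 j ltac:(lia)); destruct (H4 j ltac:(lia)) as [[Hxj0 HxjM] HTj].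
  unfold R_dist in *; apply Rabs_def2 in H1, H2, H3, Hym_close, Hyp_close.
  destruct Hxm, Hxp.
  assert (Hlo : tau G a (Tn j * xm) / g j <= tau G a (Tn j * x j) / g j).
  { apply scaled_price_le; [exact Ha | exact HTj |]; split; [apply Rmax_l|].
    apply Rmax_lub; lra. }
  assert (Hhi : tau G a (Tn j * x j) / g j <= tau G a (Tn j * xp) / g j).
  { apply scaled_price_le; [exact Ha | exact HTj |]; split; [lra|].
    apply Rmin_glb; lra. }
  unfold Tn in *; apply Rabs_def1; lra.
Qed.

Lemma nontight_infinite_resource s : (s < nS G)%nat -> ~ tight G l s ->
  exists a, (a < nA G)%nat /\ 0 < r G a s /\ ~ real_valued G l a.
Proof.
  intros Hs Hnt; apply NNPP; intros C; apply Hnt; split; [exact Hs|].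
  intros a Ha Hr; apply NNPP; intros Hnreal; apply C; eauto.
Qed.

Definition scaled_term (F : nat -> nat -> R) (j s : nat) : R :=
  F j s * sprice G (F j) s / (Tn j * g j).

Section Family.

Variable F : nat -> nat -> R.
Hypothesis HF : forall j, feasible G (dn j) (F j).

Lemma scaled_term_split j s :
  scaled_term F j s = (F j s / Tn j) * (sprice G (F j) s / g j).
Proof. unfold scaled_term, Rdiv; rewrite Rinv_mult; ring. Qed.

Lemma scaled_term_nonneg j s : 0 < Tn j -> (s < nS G)%nat -> 0 <= scaled_term F j s.
Proof.
  intros HTj Hs; rewrite scaled_term_split; apply Rmult_le_pos.
  - apply (feasible_share_bounds G Hval (dn j)); auto.
  - apply Rmult_le_pos; [apply (sprice_nonneg G Hval (dn j)); auto |].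
    left; apply Rinv_0_lt_compat, Hg.
Qed.

Lemma scaled_cost_sum j : cost G (F j) / (Tn j * g j) = fsum (nS G) (scaled_term F j).
Proof.
  unfold cost; rewrite costp_strategy_sum; unfold Rdiv, scaled_term.
  rewrite <- fsum_mult_r; reflexivity.
Qed.

Lemma scaled_term_le_cost j s : 0 < Tn j -> (s < nS G)%nat ->
  scaled_term F j s <= cost G (F j) / (Tn j * g j).
Proof.
  intros HTj Hs; rewrite scaled_cost_sum.
  apply fsum_term_le; [intros; apply scaled_term_nonneg|]; assumption.
Qed.

Lemma scaled_term_le_group_cost j s : 0 < Tn j -> (s < nS G)%nat ->
  scaled_term F j s <= / (Tn j * g j) * group_cost G (grp G s) (F j).
Proof.
  intros HTj Hs; unfold scaled_term, Rdiv; rewrite Rmult_comm.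
  apply Rmult_le_compat_l; [left; apply Rinv_0_lt_compat, Rmult_lt_0_compat; auto|].
  unfold group_cost.
  set (c := fun s' => if Nat.eqb (grp G s') (grp G s) then F j s' * sprice G (F j) s' else 0).
  replace (F j s * sprice G (F j) s) with (c s) by (unfold c; rewrite Nat.eqb_refl; reflexivity).
  apply fsum_term_le; [|exact Hs]; intros s' Hs'; unfold c.
  destruct (Nat.eqb _ _); [|lra].
  apply Rmult_le_pos; [apply (feasible_nonneg G (dn j)) | apply (sprice_nonneg G Hval (dn j))]; auto.
Qed.

Lemma negligible_term_cv0 s : (s < nS G)%nat -> negligible (grp G s) ->
  Un_cv (fun j => scaled_term F j s) 0.
Proof.
  intros Hs Hneg.
  apply (Un_cv_squeeze (fun _ => 0) (fun j => / (Tn j * g j) * group_cost G (grp G s) (F j)));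
    [apply Un_cv_const | apply Hneg, HF |].
  apply (eventually_mono (fun j => 0 < Tn j)); [|exact Tn_eventually_pos].
  intros j HTj; split.
  - apply scaled_term_nonneg; assumption.
  - apply scaled_term_le_group_cost; assumption.
Qed.

Lemma scaled_term_ge_resource_price j s a c : 0 < Tn j -> (s < nS G)%nat -> (a < nA G)%nat ->
  0 <= c <= F j s / Tn j ->
  c * (r G a s * (tau G a (Tn j * (r G a s * c)) / g j)) <= scaled_term F j s.
Proof.
  intros HTj Hs Ha [Hc Hcj]; rewrite scaled_term_split.
  pose proof (r_nonneg G Hval a s Ha Hs) as Hras.
  assert (Hmass : c * Tn j <= F j s).
  { replace (F j s) with (F j s / Tn j * Tn j) by (field; lra).
    apply Rmult_le_compat_r; lra. }
  assert (Hload : Tn j * (r G a s * c) <= loadp G (F j) a).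
  { apply Rle_trans with (r G a s * F j s).
    { rewrite <- Rmult_assoc, (Rmult_comm (Tn j)), Rmult_assoc.
      apply Rmult_le_compat_l; lra. }
    apply (fsum_term_le _ (fun s' => r G a s' * F j s') s); [|exact Hs].
    intros s' Hs'; apply Rmult_le_pos;
      [apply r_nonneg | apply (feasible_nonneg G (dn j))]; auto. }
  assert (Hx0 : 0 <= Tn j * (r G a s * c))
    by (apply Rmult_le_pos; [lra | apply Rmult_le_pos; lra]).
  assert (Htau0 : 0 <= tau G a (Tn j * (r G a s * c)))
    by (apply tau_nonneg; assumption).
  assert (Htau : tau G a (Tn j * (r G a s * c)) <= tau G a (loadp G (F j) a))
    by (apply tau_monotone; assumption).
  assert (Hprice : r G a s * tau G a (loadp G (F j) a) <= sprice G (F j) s).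
  { apply (fsum_term_le _ (fun a' => r G a' s * tau G a' (loadp G (F j) a')) a); [|exact Ha].
    intros a' Ha'; apply Rmult_le_pos; [apply r_nonneg; auto|].
    apply tau_nonneg, (loadp_nonneg G Hval (dn j)); auto. }
  apply Rmult_le_compat; [lra | | exact Hcj |].
  - apply Rmult_le_pos; [lra | apply Rmult_le_pos; [exact Htau0 | left; apply Rinv_0_lt_compat, Hg]].
  - unfold Rdiv; rewrite <- Rmult_assoc; apply Rmult_le_compat_r;
      [left; apply Rinv_0_lt_compat, Hg | nra].
Qed.

(* A nontight strategy uses a resource whose scaled price at any fixed positive
   load diverges; a volume share bounded away from 0 puts such a load on it. *)
Lemma nontight_term_cv_infty s L : (s < nS G)%nat -> ~ tight G l s -> 0 < L ->
  Un_cv (fun j => F j s / Tn j) L -> cv_infty (fun j => scaled_term F j s).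
Proof.
  intros Hs Hnt HL Hcv; set (c := L / 2); assert (Hc : 0 < c) by (unfold c; lra).
  assert (Hshare : eventually (fun j => 0 < Tn j /\ c <= F j s / Tn j)).
  { apply eventually_and; [exact Tn_eventually_pos|].
    apply (eventually_mono (fun j => c < F j s / Tn j)); [intros; lra|].
    apply (Un_cv_eventually_gt _ L); [exact Hcv | unfold c; lra]. }
  assert (Hc1 : c <= 1).
  { destruct Hshare as [N HN]; destruct (HN N (Nat.le_refl N)) as [HTN HcN].
    pose proof (feasible_share_bounds G Hval (dn N) (F N) (HF N) s HTN Hs); unfold Tn in *; lra. }
  destruct (nontight_infinite_resource s Hs Hnt) as [a [Ha [Hras Hnreal]]].
  assert (Hx : inI G a (r G a s * c)).
  { split; [nra|].
    apply Rle_trans with (r G a s); [nra | apply r_le_fmax, Hs]. }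
  assert (Hinf := proj1 (HS2 a _ Ha Hx)).
  rewrite (nonreal_price_infinite a Ha Hnreal _ Hx) in Hinf by nra.
  apply (cv_infty_le (fun j => c * (r G a s * (tau G a (Tn j * (r G a s * c)) / g j)))).
  - apply cv_infty_scal, cv_infty_scal, Hinf; assumption.
  - apply (eventually_mono _ _ (fun j '(conj HTj Hcj) =>
      scaled_term_ge_resource_price j s a c HTj Hs Ha (conj (Rlt_le _ _ Hc) Hcj)) Hshare).
Qed.

Definition tight_scaled_cost (j : nat) : R :=
  fsum (nS G) (fun s => if excluded_middle_informative (tight G l s)
                        then scaled_term F j s else 0).

Lemma tight_scaled_cost_le j : 0 < Tn j -> tight_scaled_cost j <= cost G (F j) / (Tn j * g j).
Proof.
  intros HTj; rewrite scaled_cost_sum; apply fsum_le; intros s Hs.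
  destruct (excluded_middle_informative _); [lra | apply scaled_term_nonneg; assumption].
Qed.

Section Limit.

Variable h : nat -> R.
Hypothesis Hh : forall s, (s < nS G)%nat -> Un_cv (fun j => F j s / Tn j) (h s).

Lemma limit_share_bounds s : (s < nS G)%nat -> 0 <= h s <= 1.
Proof.
  intros Hs.
  assert (Hb : eventually (fun j => 0 <= F j s / Tn j <= 1)).
  { apply (eventually_mono (fun j => 0 < Tn j)); [|exact Tn_eventually_pos].
    intros j HTj; apply (feasible_share_bounds G Hval (dn j)); auto. }
  split.
  - apply (Un_cv_ge_const _ _ _ (Hh s Hs)); revert Hb; apply eventually_mono; intros j []; auto.
  - apply (Un_cv_le_const _ _ _ (Hh s Hs)); revert Hb; apply eventually_mono; intros j []; auto.
Qed.

Lemma limit_gvol k : (k < K G)%nat -> gvol G h k = lam k.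
Proof.
  intros Hk; apply (UL_sequence (fun j => dn j k / Tn j)); [|apply HS0, Hk].
  apply (Un_cv_ext (fun j => fsum (nS G)
            (fun s => if Nat.eqb (grp G s) k then F j s / Tn j else 0))).
  - apply Un_cv_fsum; intros s Hs.
    destruct (Nat.eqb _ _); [apply Hh, Hs | apply Un_cv_const].
  - intros j; destruct (HF j) as [_ Hvol]; rewrite <- (Hvol k Hk).
    unfold gvol, Rdiv; rewrite <- fsum_mult_r; apply fsum_ext; intros s _.
    destruct (Nat.eqb _ _); ring.
Qed.

Lemma limit_lim_feasible :
  (forall s, (s < nS G)%nat -> ~ tight G l s -> h s = 0) -> lim_feasible G l lam h.
Proof.
  intros Hnt; split; [|split; [exact Hnt|]].
  - intros s Hs; apply limit_share_bounds, Hs.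
  - intros k Hk _; apply limit_gvol, Hk.
Qed.

Lemma resource_price_cv a : (a < nA G)%nat -> real_valued G l a ->
  Un_cv (fun j => tau G a (loadp G (F j) a) / g j) (lval l a (loadp G h a)).
Proof.
  intros Ha Hreal.
  apply (Un_cv_eventually_ext (fun j => tau G a (Tn j * loadp G (fun s => F j s / Tn j) a) / g j)).
  - apply real_price_cv; [exact Ha | exact Hreal | |].
    + apply Un_cv_fsum; intros s Hs; apply CV_mult; [apply Un_cv_const | apply Hh, Hs].
    + apply (eventually_mono (fun j => 0 < Tn j)); [|exact Tn_eventually_pos].
      intros j HTj; apply (share_load_in_I G Hval (dn j)); auto.
  - apply (eventually_mono (fun j => 0 < Tn j)); [|exact Tn_eventually_pos].
    intros j HTj; rewrite <- loadp_scale; [reflexivity | lra].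
Qed.

Lemma tight_price_cv s : tight G l s ->
  Un_cv (fun j => sprice G (F j) s / g j) (spricep G (lval l) h s).
Proof.
  intros [Hs Htight].
  apply (Un_cv_ext (fun j => fsum (nA G) (fun a => r G a s * (tau G a (loadp G (F j) a) / g j)))).
  - apply Un_cv_fsum; intros a Ha.
    destruct (r_nonneg G Hval a s Ha Hs) as [Hpos|Hzero].
    + apply CV_mult; [apply Un_cv_const | apply resource_price_cv, Htight]; assumption.
    + rewrite <- Hzero; apply (Un_cv_ext (fun _ => 0)); [|intros; ring].
      replace (0 * _) with 0 by ring; apply Un_cv_const.
  - intros j; unfold sprice, spricep, Rdiv; rewrite <- fsum_mult_r.
    apply fsum_ext; intros; ring.
Qed.

Lemma tight_term_cv s : tight G l s ->
  Un_cv (fun j => scaled_term F j s) (h s * spricep G (lval l) h s).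
Proof.
  intros Htight; apply (Un_cv_ext (fun j => (F j s / Tn j) * (sprice G (F j) s / g j))).
  - apply CV_mult; [apply Hh, Htight | apply tight_price_cv, Htight].
  - intros j; symmetry; apply scaled_term_split.
Qed.

Lemma nontight_limit_share_zero s B : (s < nS G)%nat -> ~ tight G l s ->
  eventually (fun j => scaled_term F j s <= B) -> h s = 0.
Proof.
  intros Hs Hnt Hbounded.
  destruct (proj1 (limit_share_bounds s Hs)) as [Hpos|]; [exfalso | auto].
  exact (cv_infty_not_bounded _ B (nontight_term_cv_infty s (h s) Hs Hnt Hpos (Hh s Hs)) Hbounded).
Qed.

Lemma scaled_cost_cv :
  (forall s, (s < nS G)%nat -> ~ tight G l s -> h s = 0 /\ Un_cv (fun j => scaled_term F j s) 0) ->
  Un_cv (fun j => cost G (F j) / (Tn j * g j)) (costp G (lval l) h).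
Proof.
  intros Hnt; apply (Un_cv_ext (fun j => fsum (nS G) (scaled_term F j)));
    [|intros j; symmetry; apply scaled_cost_sum].
  rewrite costp_strategy_sum; apply Un_cv_fsum; intros s Hs.
  destruct (classic (tight G l s)) as [Htight|Hntight]; [apply tight_term_cv, Htight|].
  destruct (Hnt s Hs Hntight) as [-> Hcv]; rewrite Rmult_0_l; exact Hcv.
Qed.

Lemma tight_scaled_cost_cv :
  (forall s, (s < nS G)%nat -> ~ tight G l s -> h s = 0) ->
  Un_cv tight_scaled_cost (costp G (lval l) h).
Proof.
  intros Hnt; rewrite costp_strategy_sum; apply Un_cv_fsum; intros s Hs.
  destruct (excluded_middle_informative _) as [Htight|Hntight]; [apply tight_term_cv, Htight|].
  rewrite (Hnt s Hs Hntight), Rmult_0_l; apply Un_cv_const.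
Qed.

End Limit.

End Family.

Lemma lam_nonneg k : (k < K G)%nat -> 0 <= lam k.
Proof.
  intros Hk; apply (Un_cv_ge_const _ _ _ (HS0 k Hk)).
  apply (eventually_mono (fun j => 0 < Tn j)); [|exact Tn_eventually_pos].
  intros j HTj; apply Rmult_le_pos; [apply Hdn, Hk | left; apply Rinv_0_lt_compat, HTj].
Qed.

Definition has_tight (k : nat) : Prop := exists s, tight G l s /\ grp G s = k.

Definition representative (k : nat) : nat :=
  epsilon (inhabits O)
    (fun s => (s < nS G)%nat /\ grp G s = k /\ (has_tight k -> tight G l s)).

Lemma representative_spec k : (k < K G)%nat ->
  (representative k < nS G)%nat /\ grp G (representative k) = k /\
  (has_tight k -> tight G l (representative k)).
Proof.
  intros Hk; unfold representative; apply epsilon_spec.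
  destruct (classic (has_tight k)) as [[s [Htight Hgrp]]|Hno].
  - exists s; split; [|split]; [apply Htight | exact Hgrp | intros; exact Htight].
  - destruct (grp_surj G Hval k Hk) as [s [Hs Hgrp]].
    exists s; split; [|split]; [exact Hs | exact Hgrp | intros H; contradiction].
Qed.

Definition concentrated (d : nat -> R) (s : nat) : R :=
  if Nat.eqb s (representative (grp G s)) then d (grp G s) else 0.

Lemma concentrated_feasible d : (forall k, (k < K G)%nat -> 0 <= d k) ->
  feasible G d (concentrated d).
Proof.
  intros Hd; split.
  - intros s Hs; unfold concentrated; destruct (Nat.eqb _ _); [apply Hd, grp_lt_K | lra]; auto.
  - intros k Hk; destruct (representative_spec k Hk) as [Hrep [Hgrp _]].
    unfold gvol; rewrite <- (fsum_eqb (nS G) (representative k) (d k) Hrep).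
    apply fsum_ext; intros s _; unfold concentrated.
    destruct (Nat.eqb_spec (grp G s) k) as [Hs|Hs].
    + rewrite Hs, Nat.eqb_sym; reflexivity.
    + destruct (Nat.eqb_spec (representative k) s) as [<-|_]; [congruence | reflexivity].
Qed.

Lemma concentrated_share_cv s : (s < nS G)%nat ->
  Un_cv (fun j => concentrated (dn j) s / Tn j)
        (if Nat.eqb s (representative (grp G s)) then lam (grp G s) else 0).
Proof.
  intros Hs; unfold concentrated; destruct (Nat.eqb _ _).
  - apply HS0, grp_lt_K, Hs; exact Hval.
  - apply (Un_cv_ext (fun _ => 0)); [apply Un_cv_const | intros; unfold Rdiv; ring].
Qed.

(* A group without tight strategy is negligible; if it had positive limit share,
   concentrating it on one strategy would make that strategy's cost blow up. *)
Lemma lam_zero_without_tight k : (k < K G)%nat -> ~ has_tight k -> lam k = 0.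
Proof.
  intros Hk Hno; destruct (lam_nonneg k Hk) as [Hpos|]; [exfalso | auto].
  destruct (HS3 k Hk) as [Hneg|]; [|contradiction].
  destruct (representative_spec k Hk) as [Hrep [Hgrp _]].
  set (F := fun j => concentrated (dn j)).
  assert (HF : forall j, feasible G (dn j) (F j))
    by (intros j; apply concentrated_feasible; intros; apply Hdn; assumption).
  assert (Hcv : Un_cv (fun j => F j (representative k) / Tn j) (lam k)).
  { pose proof (concentrated_share_cv _ Hrep) as H.
    rewrite Hgrp, Nat.eqb_refl in H; exact H. }
  apply (cv_infty_not_bounded _ 1
           (nontight_term_cv_infty F HF (representative k) (lam k) Hrep
              (fun Ht => Hno (ex_intro _ _ (conj Ht Hgrp))) Hpos Hcv)).
  rewrite <- Hgrp in Hneg.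
  apply (eventually_mono (fun j => scaled_term F j (representative k) < 1)); [intros; lra|].
  apply (Un_cv_eventually_lt _ 0); [apply negligible_term_cv0 | lra]; assumption.
Qed.

(* Realizes a profile [h] of the limit game as a feasible profile for volume [d]. *)
Definition lift (h d : nat -> R) (s : nat) : R :=
  if Rlt_dec 0 (lam (grp G s)) then h s * d (grp G s) / lam (grp G s) else concentrated d s.

Section Lift.

Variable h : nat -> R.
Hypothesis Hh : lim_feasible G l lam h.

Lemma lim_feasible_zero_share s : (s < nS G)%nat -> ~ 0 < lam (grp G s) -> h s = 0.
Proof.
  intros Hs Hlam; destruct Hh as [Hnonneg [Hnt Hvol]].
  pose proof (grp_lt_K G Hval s Hs) as Hk.
  assert (Hzero : lam (grp G s) = 0) by (pose proof (lam_nonneg _ Hk); lra).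
  destruct (classic (has_tight (grp G s))) as [Htight|Hno].
  - apply Rle_antisym; [|apply Hnonneg, Hs].
    rewrite <- Hzero, <- (Hvol _ Hk Htight); unfold gvol.
    set (v := fun s' => if Nat.eqb (grp G s') (grp G s) then h s' else 0).
    replace (h s) with (v s) by (unfold v; rewrite Nat.eqb_refl; reflexivity).
    apply fsum_term_le; [|exact Hs]; intros s' Hs'; unfold v.
    destruct (Nat.eqb _ _); [apply Hnonneg, Hs' | lra].
  - apply Hnt; [exact Hs|]; intros Htight; apply Hno; exists s; auto.
Qed.

Lemma lift_feasible d : (forall k, (k < K G)%nat -> 0 <= d k) -> feasible G d (lift h d).
Proof.
  intros Hd; destruct (concentrated_feasible d Hd) as [Hc_nonneg Hc_vol].
  destruct Hh as [Hnonneg [_ Hvol]]; split.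
  - intros s Hs; unfold lift; destruct (Rlt_dec _ _) as [Hpos|]; [|apply Hc_nonneg, Hs].
    apply Rmult_le_pos; [apply Rmult_le_pos; [apply Hnonneg, Hs | apply Hd, grp_lt_K, Hs]|];
      [exact Hval | left; apply Rinv_0_lt_compat, Hpos].
  - intros k Hk; unfold gvol, lift.
    destruct (Rlt_dec 0 (lam k)) as [Hpos|Hnpos].
    + assert (Htight : has_tight k)
        by (apply NNPP; intros Hno; rewrite (lam_zero_without_tight k Hk Hno) in Hpos; lra).
      rewrite (fsum_ext _ _ (fun s => (if Nat.eqb (grp G s) k then h s else 0) * (d k / lam k))).
      * rewrite fsum_mult_r; fold (gvol G h k); rewrite (Hvol k Hk Htight); field; lra.
      * intros s _; destruct (Nat.eqb_spec (grp G s) k) as [<-|]; [|ring].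
        destruct (Rlt_dec _ _); [field; lra | contradiction].
    + rewrite <- (Hc_vol k Hk); unfold gvol; apply fsum_ext; intros s _.
      destruct (Nat.eqb_spec (grp G s) k) as [<-|]; [|reflexivity].
      destruct (Rlt_dec _ _); [contradiction | reflexivity].
Qed.

Lemma lift_share_cv s : (s < nS G)%nat -> Un_cv (fun j => lift h (dn j) s / Tn j) (h s).
Proof.
  intros Hs; pose proof (grp_lt_K G Hval s Hs) as Hk; unfold lift.
  destruct (Rlt_dec 0 (lam (grp G s))) as [Hpos|Hnpos].
  - apply (Un_cv_ext (fun j => h s / lam (grp G s) * (dn j (grp G s) / Tn j))).
    + pose proof (CV_mult _ _ _ _ (Un_cv_const (h s / lam (grp G s))) (HS0 _ Hk)) as Hcv.
      replace (h s / lam (grp G s) * lam (grp G s)) with (h s) in Hcv by (field; lra).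
      exact Hcv.
    + intros j; unfold Rdiv; ring.
  - assert (Hzero : lam (grp G s) = 0) by (pose proof (lam_nonneg _ Hk); lra).
    rewrite (lim_feasible_zero_share s Hs Hnpos).
    pose proof (concentrated_share_cv s Hs) as Hcv; rewrite Hzero in Hcv.
    destruct (Nat.eqb _ _); exact Hcv.
Qed.

Lemma lift_nontight s : (s < nS G)%nat -> ~ tight G l s ->
  h s = 0 /\ Un_cv (fun j => scaled_term (fun j => lift h (dn j)) j s) 0.
Proof.
  intros Hs Hnt; pose proof (grp_lt_K G Hval s Hs) as Hk.
  split; [apply Hh; assumption|].
  destruct (HS3 _ Hk) as [Hneg|Htight].
  - apply negligible_term_cv0; [|exact Hs | exact Hneg].
    intros j; apply lift_feasible; intros; apply Hdn; assumption.
  - destruct (representative_spec _ Hk) as [_ [_ Hrep]].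
    assert (Hzero : forall j, lift h (dn j) s = 0).
    { intros j; unfold lift, concentrated.
      destruct (Rlt_dec _ _).
      - rewrite (proj1 (proj2 Hh) s Hs Hnt); unfold Rdiv; ring.
      - destruct (Nat.eqb_spec s (representative (grp G s))) as [E|]; [|reflexivity].
        exfalso; apply Hnt; rewrite E; apply Hrep, Htight. }
    apply (Un_cv_ext (fun _ => 0)); [apply Un_cv_const|].
    intros j; unfold scaled_term; rewrite Hzero; unfold Rdiv; ring.
Qed.

Lemma lift_scaled_cost_cv :
  Un_cv (fun j => cost G (lift h (dn j)) / (Tn j * g j)) (costp G (lval l) h).
Proof.
  apply (scaled_cost_cv (fun j => lift h (dn j))).
  - intros j; apply lift_feasible; intros; apply Hdn; assumption.
  - exact lift_share_cv.
  - exact lift_nontight.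
Qed.

End Lift.

Lemma scaled_cost_le j f f' : 0 < Tn j -> cost G f <= cost G f' ->
  cost G f / (Tn j * g j) <= cost G f' / (Tn j * g j).
Proof.
  intros HTj Hle; apply Rmult_le_compat_r; [|exact Hle].
  left; apply Rinv_0_lt_compat, Rmult_lt_0_compat; [exact HTj | apply Hg].
Qed.

Section Equilibrium.

Variables (F : nat -> nat -> R) (h : nat -> R).
Hypothesis HNE : forall j, is_NE G (dn j) (F j).
Hypothesis Hh : forall s, (s < nS G)%nat -> Un_cv (fun j => F j s / Tn j) (h s).

Let HF j : feasible G (dn j) (F j) := proj1 (HNE j).

Lemma NE_term_le_tight j s s0 : 0 < Tn j -> (s < nS G)%nat -> tight G l s0 ->
  grp G s0 = grp G s ->
  scaled_term F j s <= (F j s / Tn j) * (sprice G (F j) s0 / g j).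
Proof.
  intros HTj Hs Htight Hgrp; rewrite scaled_term_split.
  destruct (feasible_nonneg G _ _ (HF j) s Hs) as [Hpos|Hzero].
  - apply Rmult_le_compat_l; [apply (feasible_share_bounds G Hval (dn j)); auto|].
    apply Rmult_le_compat_r; [left; apply Rinv_0_lt_compat, Hg|].
    apply (proj2 (HNE j)); [exact Hs | apply Htight | congruence | exact Hpos].
  - rewrite <- Hzero; unfold Rdiv; rewrite !Rmult_0_l; lra.
Qed.

(* In a group with a tight strategy [s0], equilibrium prices of the other
   strategies are bounded by the (convergent) scaled price of [s0]. *)
Lemma NE_nontight s : (s < nS G)%nat -> ~ tight G l s ->
  h s = 0 /\ Un_cv (fun j => scaled_term F j s) 0.
Proof.
  intros Hs Hnt; pose proof (grp_lt_K G Hval s Hs) as Hk.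
  destruct (HS3 _ Hk) as [Hneg|[s0 [Htight Hgrp]]].
  - pose proof (negligible_term_cv0 F HF s Hs Hneg) as Hcv; split; [|exact Hcv].
    apply (nontight_limit_share_zero F HF h Hh s 1 Hs Hnt).
    apply (eventually_mono (fun j => scaled_term F j s < 1)); [intros; lra|].
    apply (Un_cv_eventually_lt _ 0); [exact Hcv | lra].
  - set (P := spricep G (lval l) h s0).
    assert (Hbound : Un_cv (fun j => (F j s / Tn j) * (sprice G (F j) s0 / g j)) (h s * P))
      by (apply CV_mult; [apply Hh, Hs | exact (tight_price_cv F HF h Hh s0 Htight)]).
    assert (Hsq : eventually (fun j => 0 <= scaled_term F j s <=
                                       (F j s / Tn j) * (sprice G (F j) s0 / g j))).
    { apply (eventually_mono (fun j => 0 < Tn j)); [|exact Tn_eventually_pos].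
      intros j HTj; split; [apply (scaled_term_nonneg F HF); assumption|].
      apply NE_term_le_tight; assumption. }
    assert (Hzero : h s = 0).
    { apply (nontight_limit_share_zero F HF h Hh s (h s * P + 1) Hs Hnt).
      destruct (eventually_and _ _ Hsq
        (Un_cv_eventually_lt _ _ (h s * P + 1) Hbound ltac:(lra))) as [N HN].
      exists N; intros j Hj; destruct (HN j Hj); lra. }
    split; [exact Hzero|].
    rewrite Hzero, Rmult_0_l in Hbound.
    exact (Un_cv_squeeze _ _ _ 0 (Un_cv_const 0) Hbound Hsq).
Qed.

Lemma NE_scaled_cost_cv :
  Un_cv (fun j => cost G (F j) / (Tn j * g j)) (costp G (lval l) h).
Proof. apply (scaled_cost_cv F HF h Hh), NE_nontight. Qed.

Lemma NE_limit_lim_NE : lim_NE G l lam h.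
Proof.
  split; [apply (limit_lim_feasible F HF h Hh); intros; apply NE_nontight; assumption|].
  intros s s' Htight Htight' Hgrp Hpos.
  apply (Un_cv_le _ _ _ _ (tight_price_cv F HF h Hh s Htight) (tight_price_cv F HF h Hh s' Htight')).
  apply (eventually_mono (fun j => 0 < F j s / Tn j /\ 0 < Tn j)).
  - intros j [Hshare HTj]; apply Rmult_le_compat_r; [left; apply Rinv_0_lt_compat, Hg|].
    apply (proj2 (HNE j)); [apply Htight | apply Htight' | exact Hgrp |].
    replace (F j s) with (F j s / Tn j * Tn j) by (field; lra); nra.
  - apply eventually_and; [|exact Tn_eventually_pos].
    apply (Un_cv_eventually_gt _ (h s)); [apply Hh, Htight | exact Hpos].
Qed.

End Equilibrium.

Section Optimum.

Variables (S : nat -> nat -> R) (h : nat -> R) (B : R).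
Hypothesis HSO : forall j, is_SO G (dn j) (S j).
Hypothesis Hh : forall s, (s < nS G)%nat -> Un_cv (fun j => S j s / Tn j) (h s).
Hypothesis HB : eventually (fun j => cost G (S j) / (Tn j * g j) <= B).

Let HS j : feasible G (dn j) (S j) := proj1 (HSO j).

Lemma SO_nontight_zero s : (s < nS G)%nat -> ~ tight G l s -> h s = 0.
Proof.
  intros Hs Hnt; apply (nontight_limit_share_zero S HS h Hh s B Hs Hnt).
  apply (eventually_mono (fun j => 0 < Tn j /\ cost G (S j) / (Tn j * g j) <= B));
    [|apply eventually_and; [exact Tn_eventually_pos | exact HB]].
  intros j [HTj HBj]; eapply Rle_trans; [apply scaled_term_le_cost|]; eassumption.
Qed.

Lemma SO_tight_scaled_cost_cv : Un_cv (tight_scaled_cost S) (costp G (lval l) h).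
Proof. apply (tight_scaled_cost_cv S HS h Hh), SO_nontight_zero. Qed.

(* The tight part of the optimal cost minorizes the cost of lifted profiles,
   and both converge to the corresponding limit-game costs. *)
Lemma SO_limit_lim_SO : lim_SO G l lam h.
Proof.
  split; [apply (limit_lim_feasible S HS h Hh), SO_nontight_zero|].
  intros h' Hh'.
  apply (Un_cv_le _ _ _ _ SO_tight_scaled_cost_cv (lift_scaled_cost_cv h' Hh')).
  apply (eventually_mono (fun j => 0 < Tn j)); [|exact Tn_eventually_pos].
  intros j HTj; eapply Rle_trans; [apply (tight_scaled_cost_le S HS), HTj|].
  apply scaled_cost_le; [exact HTj|].
  apply (proj2 (HSO j)), lift_feasible; [exact Hh' | intros; apply Hdn; assumption].
Qed.

End Optimum.

Hypothesis HS4 : forall h h', lim_NE G l lam h -> lim_SO G l lam h' ->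
  costp G (lval l) h = costp G (lval l) h'.
Hypothesis HS5 : forall h, lim_NE G l lam h -> 0 < costp G (lval l) h.

(* The scaled optimal cost is squeezed between the tight part of itself, which
   tends to the limit-game optimum, and the scaled equilibrium cost, which tends
   to the limit-game equilibrium cost; (S4) makes the two limits equal. *)
Lemma PoA_cv_1 F S h1 h2 :
  (forall j, is_NE G (dn j) (F j)) -> (forall j, is_SO G (dn j) (S j)) ->
  (forall s, (s < nS G)%nat -> Un_cv (fun j => F j s / Tn j) (h1 s)) ->
  (forall s, (s < nS G)%nat -> Un_cv (fun j => S j s / Tn j) (h2 s)) ->
  Un_cv (fun j => cost G (F j) / cost G (S j)) 1.
Proof.
  intros HNE HSO Hh1 Hh2.
  pose proof (NE_scaled_cost_cv F h1 HNE Hh1) as HcvNE.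
  assert (HSO_le : eventually (fun j => 0 < Tn j /\
            cost G (S j) / (Tn j * g j) <= cost G (F j) / (Tn j * g j))).
  { apply (eventually_mono (fun j => 0 < Tn j)); [|exact Tn_eventually_pos].
    intros j HTj; split; [exact HTj|].
    apply scaled_cost_le; [exact HTj | apply (proj2 (HSO j)), (proj1 (HNE j))]. }
  assert (HB : eventually (fun j => cost G (S j) / (Tn j * g j) <= costp G (lval l) h1 + 1)).
  { destruct (eventually_and _ _ HSO_le
      (Un_cv_eventually_lt _ _ (costp G (lval l) h1 + 1) HcvNE ltac:(lra))) as [N HN].
    exists N; intros j Hj; destruct (HN j Hj) as [[_ H1] H2]; lra. }
  assert (Heq : costp G (lval l) h2 = costp G (lval l) h1)
    by (symmetry; apply HS4; [apply (NE_limit_lim_NE F) | apply (SO_limit_lim_SO S h2 (costp G (lval l) h1 + 1))];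
        assumption).
  assert (HcvSO : Un_cv (fun j => cost G (S j) / (Tn j * g j)) (costp G (lval l) h1)).
  { apply (Un_cv_squeeze (tight_scaled_cost S) (fun j => cost G (F j) / (Tn j * g j)));
      [rewrite <- Heq; apply (SO_tight_scaled_cost_cv S h2 _ HSO Hh2 HB) | exact HcvNE |].
    apply (eventually_mono _ _ (fun j '(conj HTj Hle) =>
      conj (tight_scaled_cost_le S (fun j => proj1 (HSO j)) j HTj) Hle) HSO_le). }
  apply (Un_cv_eventually_ext (fun j => (cost G (F j) / (Tn j * g j)) / (cost G (S j) / (Tn j * g j)))).
  - apply (Un_cv_ratio_1 _ _ _ HcvNE HcvSO), HS5, (NE_limit_lim_NE F); assumption.
  - apply (eventually_mono (fun j => 0 < Tn j)); [|exact Tn_eventually_pos].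
    intros j HTj; set (X := Tn j * g j).
    assert (HX : X <> 0) by (unfold X; pose proof (Hg j); nra).
    unfold Rdiv; rewrite Rinv_mult, Rinv_inv.
    replace (cost G (F j) * / X * (/ cost G (S j) * X))
      with (cost G (F j) * / cost G (S j) * (X * / X)) by ring.
    rewrite Rinv_r by exact HX; ring.
Qed.

End ScaledGames.

(** * Passing to convergent subsequences *)

Lemma feasible_shares_cv_subseq G dn F : valid_NCG G -> cv_infty (fun j => T G (dn j)) ->
  (forall j, feasible G (dn j) (F j)) ->
  exists psi h, strict_incr psi /\
    forall s, (s < nS G)%nat -> Un_cv (fun j => F (psi j) s / T G (dn (psi j))) (h s).
Proof.
  intros Hval HT HF.
  apply (eventually_bounded_family_cv_subseq (nS G) (fun j s => F j s / T G (dn j)) 1).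
  apply (eventually_mono (fun j => 0 < T G (dn j))); [|apply cv_infty_eventually_gt, HT].
  intros j HTj s Hs; apply Rabs_le.
  pose proof (feasible_share_bounds G Hval (dn j) (F j) (HF j) s HTj Hs); lra.
Qed.

Lemma ER_lim_subseq u e psi : ER_lim u e -> strict_incr psi -> ER_lim (fun n => u (psi n)) e.
Proof. destruct e; simpl; [apply Un_cv_subseq | apply cv_infty_subseq]. Qed.

Lemma negligible_subseq G dn g k psi : strict_incr psi ->
  (forall i, exists f, feasible G (dn i) f) -> negligible G dn g k ->
  negligible G (fun j => dn (psi j)) (fun j => g (psi j)) k.
Proof.
  intros Hpsi Hex Hneg F HF.
  destruct (extend_subfamily psi (fun i f => feasible G (dn i) f) F Hpsi Hex HF)
    as [F' [HF' HF'psi]].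
  apply (Un_cv_ext (fun j => / (T G (dn (psi j)) * g (psi j)) * group_cost G k (F' (psi j)))).
  - apply (Un_cv_subseq (fun i => / (T G (dn i) * g i) * group_cost G k (F' i))); auto.
  - intros j; rewrite HF'psi; reflexivity.
Qed.

Lemma scalable_PoA_cv_subseq G Adm : valid_NCG G ->
  (forall d, Adm d -> forall k, (k < K G)%nat -> 0 <= d k) -> scalable G Adm ->
  forall dn, (forall n, Adm (dn n)) -> cv_infty (fun n => T G (dn n)) ->
  forall fNE fSO : nat -> nat -> R,
    (forall n, is_NE G (dn n) (fNE n)) -> (forall n, is_SO G (dn n) (fSO n)) ->
  exists psi, strict_incr psi /\ Un_cv (fun j => cost G (fNE (psi j)) / cost G (fSO (psi j))) 1.
Proof.
  intros Hval Hnonneg Hsc dn Hadm HT fNE fSO HNE HSO.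
  destruct (Hsc dn Hadm HT) as (phi & g & lam & l & Hphi & Hg & HS0 & HS1 & HS2 & HS3 & HS4 & HS5).
  pose proof (cv_infty_subseq _ phi HT Hphi) as HTphi.
  destruct (feasible_shares_cv_subseq G (fun i => dn (phi i)) (fun i => fNE (phi i)) Hval HTphi)
    as [psi1 [h1 [Hpsi1 Hh1]]]; [intros; apply HNE|].
  destruct (feasible_shares_cv_subseq G (fun j => dn (phi (psi1 j))) (fun j => fSO (phi (psi1 j)))
              Hval (cv_infty_subseq _ _ HTphi Hpsi1)) as [psi2 [h2 [Hpsi2 Hh2]]];
    [intros; apply HSO|].
  set (psi := fun j => psi1 (psi2 j)).
  assert (Hpsi : strict_incr psi) by (unfold psi; apply strict_incr_comp; assumption).
  exists (fun j => phi (psi j)); split; [apply strict_incr_comp; assumption|].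
  apply (PoA_cv_1 G Hval (fun j => dn (phi (psi j))) (fun j => g (psi j)) lam l)
    with (h1 := h1) (h2 := h2).
  - intros j k Hk; apply (Hnonneg _ (Hadm _)), Hk.
  - exact (cv_infty_subseq (fun i => T G (dn (phi i))) psi HTphi Hpsi).
  - intros; apply Hg.
  - intros k Hk; apply (Un_cv_subseq (fun i => dn (phi i) k / T G (dn (phi i)))); auto.
  - exact HS1.
  - intros a x Ha Hx; destruct (HS2 a x Ha Hx) as [Hlim Hcont]; split; [|exact Hcont].
    apply (ER_lim_subseq (fun i => tau G a (T G (dn (phi i)) * x) / g i)); assumption.
  - intros k Hk; destruct (HS3 k Hk) as [Hneg|Htight]; [left | right; exact Htight].
    apply (negligible_subseq G (fun i => dn (phi i)) g k psi Hpsi); [|exact Hneg].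
    intros i; exists (fNE (phi i)); apply HNE.
  - exact HS4.
  - exact HS5.
  - intros; apply HNE.
  - intros; apply HSO.
  - intros s Hs; apply (Un_cv_subseq (fun j => fNE (phi (psi1 j)) s / T G (dn (phi (psi1 j)))));
      [apply Hh1, Hs | exact Hpsi2].
  - exact Hh2.
Qed.

Theorem theorem2 (G : Game) (Adm : (nat -> R) -> Prop) :
  valid_NCG G ->
  (forall d, Adm d -> forall k, (k < K G)%nat -> 0 <= d k) ->
  scalable G Adm ->
  AWDG G Adm.
Proof.
  intros Hval Hnonneg Hsc dn Hadm HT fNE fSO HNE HSO.
  apply Un_cv_of_subseqs; intros psi Hpsi.
  exact (scalable_PoA_cv_subseq G Adm Hval Hnonneg Hsc (fun n => dn (psi n))
           (fun n => Hadm (psi n)) (cv_infty_subseq _ psi HT Hpsi)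
           (fun n => fNE (psi n)) (fun n => fSO (psi n))
           (fun n => HNE (psi n)) (fun n => HSO (psi n))).
Qed.
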